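(* Let $X$ be a topological space, $(Y,d)$ a metric space and $f:X\to Y$ a mapping. Assume that for some integer $n\ge 2$ there are strictly functionally discrete families $\mathcal F_0,\mathcal F_1,\dots,\mathcal F_n$ of subsets of $X$ and mappings $p_k:\mathcal F_k\to Y$, $k\in\{0,\dots,n\}$, such that: (A) $\mathcal F_0$ consists of the single set $X$; (B) for every $k\le n$ and $F\in\mathcal F_k$, $\sup_{x\in F} d(f(x),p_k(F))<\frac{1}{2^{k+2}}$; (C) for every $k<n$ each set of $\mathcal F_{k+1}$ is contained in some set of $\mathcal F_k$; (D) for every $F\in\mathcal F_1$ the points $p_0(X)$ and $p_1(F)$ can be joined by an arc in $Y$; (E) for every $k\in\{1,\dots,n-1\}$ and all $F\in\mathcal F_{k+1}$, $F'\in\mathcal F_k$ with $F\subseteq F'$, the points $p_{k+1}(F)$ and $p_k(F')$ can be joined by an arc of diameter $<\frac{1}{2^{k+2}}$ in $Y$. Then there exists a continuous mapping $g:X\to Y$ such that $d(f(x),g(x))<\frac{1}{2^k}$ for every $k\in\{1,\dots,n\}$ and every $x\in\bigcup\mathcal F_k$.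
   Context: A family $\mathcal A$ of subsets of $X$ is strictly functionally discrete if for every $A\in\mathcal A$ there is a continuous $f_A:X\to[0,1]$ with $A\subseteq f_A^{-1}(0)$ such that the family $(f_A^{-1}([0,1)):A\in\mathcal A)$ is discrete (every point of $X$ has a neighborhood meeting at most one member). $\bigcup\mathcal F_k$ denotes the union of all members of $\mathcal F_k$. Points $a,b$ are joined by an arc in $Y$ if there is a continuous $\gamma:[0,1]\to Y$ with $\gamma(0)=a$, $\gamma(1)=b$; its diameter is that of $\gamma([0,1])$. *)

From Stdlib Require Import Reals.
Open Scope R_scope.

Definition is_topology {X : Type} (open : (X -> Prop) -> Prop) : Prop :=
  open (fun _ => True) /\
  open (fun _ => False) /\
  (forall U V, open U -> open V -> open (fun x => U x /\ V x)) /\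
  (forall (I : Type) (U : I -> X -> Prop),
      (forall i, open (U i)) -> open (fun x => exists i, U i x)).

Definition is_metric {Y : Type} (d : Y -> Y -> R) : Prop :=
  (forall x y, 0 <= d x y) /\
  (forall x y, d x y = 0 <-> x = y) /\
  (forall x y, d x y = d y x) /\
  (forall x y z, d x z <= d x y + d y z).

Definition metric_open {Y : Type} (d : Y -> Y -> R) (V : Y -> Prop) : Prop :=
  forall y, V y -> exists eps, 0 < eps /\ forall z, d y z < eps -> V z.

Definition continuous_top_metric {X Y : Type} (open : (X -> Prop) -> Prop)
  (d : Y -> Y -> R) (g : X -> Y) : Prop :=
  forall V, metric_open d V -> open (fun x => V (g x)).

Definition R_dist_fun (a b : R) : R := Rabs (a - b).

Definition strictly_functionally_discrete {X : Type} (open : (X -> Prop) -> Prop)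
  {I : Type} (F : I -> X -> Prop) : Prop :=
  exists h : I -> X -> R,
    (forall i, continuous_top_metric open R_dist_fun (h i)) /\
    (forall i x, 0 <= h i x <= 1) /\
    (forall i x, F i x -> h i x = 0) /\
    (* the family (h_i^{-1}([0,1)))_i is discrete *)
    (forall x, exists U, open U /\ U x /\
       forall i j, (exists y, U y /\ h i y < 1) ->
                   (exists y, U y /\ h j y < 1) -> i = j).

Definition path_on01 {Y : Type} (d : Y -> Y -> R) (gamma : R -> Y) : Prop :=
  forall t, 0 <= t <= 1 -> forall eps, 0 < eps -> exists delta, 0 < delta /\
    forall s, 0 <= s <= 1 -> Rabs (s - t) < delta -> d (gamma s) (gamma t) < eps.

Definition joined_by_arc {Y : Type} (d : Y -> Y -> R) (a b : Y) : Prop :=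
  exists gamma : R -> Y, path_on01 d gamma /\ gamma 0 = a /\ gamma 1 = b.

Definition joined_by_small_arc {Y : Type} (d : Y -> Y -> R) (a b : Y) (r : R) : Prop :=
  exists gamma : R -> Y, path_on01 d gamma /\ gamma 0 = a /\ gamma 1 = b /\
    exists r', r' < r /\
      forall s t, 0 <= s <= 1 -> 0 <= t <= 1 -> d (gamma s) (gamma t) <= r'.

(* Stage m of the construction carries continuous bumps a_j, one per member of F_m,
   equal to 1 on F_m j, and a continuous map G_m with G_m = p_m(j) wherever
   a_j > 1/2.  The bump of a child i of j is min(1 - h_i, max(0, 2 a_j - 1)):
   it lives inside the discrete neighbourhood {h_i < 1} and inside {a_j > 1/2},
   where G_m = p_m(j).  There G_{m+1} runs along the arc from p_m(j) to
   p_{m+1}(i) at parameter min(1, 2 a_i); elsewhere G_{m+1} = G_m.  Discreteness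
   makes this gluing continuous, and the arc diameters make
   d(G_m, G_{m+1}) < 2^-(m+2) for m >= 1, so the errors telescope. *)

From Stdlib Require Import Reals Lia Lra Classical ClassicalEpsilon
  FunctionalExtensionality PropExtensionality.
Open Scope R_scope.

Definition continuous_at {X Y : Type} (open : (X -> Prop) -> Prop)
  (d : Y -> Y -> R) (g : X -> Y) (x : X) : Prop :=
  forall e, 0 < e -> exists U, open U /\ U x /\ forall y, U y -> d (g x) (g y) < e.

Definition at_most_one_locally {X I : Type} (open : (X -> Prop) -> Prop)
  (P : I -> X -> Prop) : Prop :=
  forall x, exists U, open U /\ U x /\
    forall i j, (exists y, U y /\ P i y) -> (exists y, U y /\ P j y) -> i = j.

Lemma at_most_one_locally_mono {X I : Type} (open : (X -> Prop) -> Prop)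
  (P Q : I -> X -> Prop) :
  at_most_one_locally open P -> (forall i x, Q i x -> P i x) ->
  at_most_one_locally open Q.
Proof.
  intros HP HQP x. destruct (HP x) as [U [HU [Ux HUone]]].
  exists U; repeat split; auto.
  intros i j [y [Uy Hy]] [z [Uz Hz]]. apply HUone; eauto.
Qed.

Lemma is_metric_R_dist_fun : is_metric R_dist_fun.
Proof.
  unfold R_dist_fun; repeat split; intros.
  - apply Rabs_pos.
  - revert H; unfold Rabs; destruct Rcase_abs; lra.
  - subst; rewrite Rminus_diag, Rabs_R0; reflexivity.
  - apply Rabs_minus_sym.
  - unfold Rabs; repeat destruct Rcase_abs; lra.
Qed.

Section MetricTarget.
Variables (X : Type) (open : (X -> Prop) -> Prop).
Hypothesis Htop : is_topology open.
Variables (Y : Type) (d : Y -> Y -> R).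
Hypothesis Hmet : is_metric d.

Lemma d_self y : d y y = 0.
Proof. destruct Hmet as [_ [Hz _]]. apply Hz; reflexivity. Qed.

Lemma d_sym y z : d y z = d z y.
Proof. destruct Hmet as [_ [_ [Hs _]]]. apply Hs. Qed.

Lemma d_triangle y z w : d y w <= d y z + d z w.
Proof. destruct Hmet as [_ [_ [_ Ht]]]. apply Ht. Qed.

Lemma open_and U V : open U -> open V -> open (fun x => U x /\ V x).
Proof. destruct Htop as [_ [_ [Hand _]]]. apply Hand. Qed.

Lemma continuous_top_metric_iff g :
  continuous_top_metric open d g <-> forall x, continuous_at open d g x.
Proof.
  split.
  - intros Hg x e He. exists (fun y => d (g x) (g y) < e). split; [|split].
    + apply (Hg (fun z => d (g x) z < e)). intros z Hz.
      exists (e - d (g x) z). split; [lra|]. intros w Hw.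
      pose proof (d_triangle (g x) z w). lra.
    + rewrite d_self. exact He.
    + auto.
  - intros Hg V HV. destruct Htop as [_ [_ [_ Hunion]]].
    set (J := {U : X -> Prop | open U /\ forall y, U y -> V (g y)}).
    replace (fun x => V (g x)) with (fun x => exists j : J, proj1_sig j x).
    { apply Hunion. intros [U [HU HUV]]. exact HU. }
    apply functional_extensionality; intro x. apply propositional_extensionality.
    split.
    + intros [[U [HU HUV]] Ux]. exact (HUV x Ux).
    + intro Hx. destruct (HV _ Hx) as [eps [Heps Hball]].
      destruct (Hg x eps Heps) as [U [HU [Ux HUball]]].
      exists (exist _ U (conj HU (fun y Uy => Hball _ (HUball y Uy)))). exact Ux.
Qed.

Lemma continuous_at_const (c : Y) x : continuous_at open d (fun _ => c) x.
Proof.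
  intros e He. exists (fun _ => True). destruct Htop as [Hfull _].
  repeat split; auto. intros. rewrite d_self. exact He.
Qed.

Lemma continuous_at_locally_eq (U : X -> Prop) (H K : X -> Y) x :
  open U -> U x -> (forall y, U y -> H y = K y) ->
  continuous_at open d K x -> continuous_at open d H x.
Proof.
  intros HU Ux HK HKcont e He. destruct (HKcont e He) as [V [HV [Vx HVclose]]].
  exists (fun y => U y /\ V y). split; [apply open_and; auto|]. split; [auto|].
  intros y [Uy Vy]. rewrite (HK x Ux), (HK y Uy). auto.
Qed.

Definition graft (G : X -> Y) (b : X -> R) (gamma : R -> Y) (y : X) : Y :=
  if Rlt_dec 0 (b y) then gamma (b y) else G y.

Lemma continuous_at_graft G b gamma x :
  continuous_at open d G x -> continuous_at open R_dist_fun b x ->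
  (forall y, 0 <= b y <= 1) -> path_on01 d gamma ->
  (forall y, 0 < b y -> G y = gamma 0) ->
  continuous_at open d (graft G b gamma) x.
Proof.
  intros HG Hb Hrange Hgamma Hstart e He. unfold graft.
  destruct (Rlt_dec 0 (b x)) as [Hx|Hx].
  - destruct (Hgamma (b x) (Hrange x) e He) as [delta [Hdelta Hnear]].
    destruct (Hb (Rmin (b x) delta)) as [U [HU [Ux Hclose]]].
    { apply Rmin_glb_lt; lra. }
    exists U; repeat split; auto. intros y Uy.
    specialize (Hclose y Uy). unfold R_dist_fun in Hclose.
    pose proof (Rmin_l (b x) delta); pose proof (Rmin_r (b x) delta).
    apply Rabs_def2 in Hclose.
    destruct (Rlt_dec 0 (b y)); [|lra].
    rewrite d_sym. apply Hnear; [apply Hrange|]. apply Rabs_def1; lra.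
  - assert (Hx0 : b x = 0) by (pose proof (Hrange x); lra).
    destruct (Hgamma 0 ltac:(lra) (e / 2)) as [delta [Hdelta Hnear]]; [lra|].
    destruct (Hb delta Hdelta) as [U1 [HU1 [U1x Hclose]]].
    destruct (HG (e / 2)) as [U2 [HU2 [U2x HGclose]]]; [lra|].
    exists (fun y => U1 y /\ U2 y). split; [apply open_and; auto|]. split; [auto|].
    intros y [U1y U2y]. specialize (HGclose y U2y).
    destruct (Rlt_dec 0 (b y)) as [Hy|Hy]; [|lra].
    rewrite (Hstart y Hy) in HGclose.
    assert (Harc : d (gamma (b y)) (gamma 0) < e / 2).
    { apply Hnear; [apply Hrange|].
      specialize (Hclose y U1y). unfold R_dist_fun in Hclose.
      rewrite Hx0, Rabs_minus_sym in Hclose. exact Hclose. }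
    pose proof (d_triangle (G x) (gamma 0) (gamma (b y))).
    rewrite (d_sym (gamma 0)) in *. lra.
Qed.

(* Locally at most one arc is active, so locally the glued map is a single
   [graft]. *)
Lemma glue_arcs {I : Type} (G : X -> Y) (b : I -> X -> R) (gamma : I -> R -> Y) :
  (forall x, continuous_at open d G x) ->
  (forall i x, continuous_at open R_dist_fun (b i) x) ->
  (forall i x, 0 <= b i x <= 1) ->
  (forall i, path_on01 d (gamma i)) ->
  (forall i x, 0 < b i x -> G x = gamma i 0) ->
  at_most_one_locally open (fun i x => 0 < b i x) ->
  exists G', (forall x, continuous_at open d G' x) /\
    (forall x, (forall i, b i x <= 0) -> G' x = G x) /\
    (forall i x, 0 < b i x -> G' x = gamma i (b i x)).
Proof.
  intros HG Hb Hrange Hgamma Hstart Hone.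
  assert (Hunique : forall i j x, 0 < b i x -> 0 < b j x -> i = j).
  { intros i j x Hi Hj. destruct (Hone x) as [U [_ [Ux HU]]]. apply HU; eauto. }
  destruct (choice (fun x y => ((forall i, b i x <= 0) -> y = G x) /\
                               (forall i, 0 < b i x -> y = gamma i (b i x))))
    as [G' HG'].
  { intro x. destruct (classic (exists i, 0 < b i x)) as [[i Hi]|Hnone].
    - exists (gamma i (b i x)). split.
      + intro Hall. specialize (Hall i). lra.
      + intros j Hj. rewrite (Hunique i j x Hi Hj). reflexivity.
    - exists (G x). split; [reflexivity|]. intros i Hi. exfalso; eauto. }
  exists G'. split; [|split; intros; apply HG'; assumption].
  intro x. destruct (Hone x) as [U [HU [Ux HUone]]].
  destruct (classic (exists i y, U y /\ 0 < b i y)) as [[i [y0 [Uy0 Hy0]]]|Hnone].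
  - apply (continuous_at_locally_eq U _ (graft G (b i) (gamma i))); auto.
    + intros y Uy. unfold graft. destruct (Rlt_dec 0 (b i y)) as [Hy|Hy].
      * apply HG'; exact Hy.
      * apply HG'. intro j. apply Rnot_lt_le. intro Hj. apply Hy.
        replace i with j by (apply HUone; eauto). exact Hj.
    + apply continuous_at_graft; auto.
  - apply (continuous_at_locally_eq U _ G); auto.
    intros y Uy. apply HG'. intro j. apply Rnot_lt_le. intro Hj. eauto.
Qed.

End MetricTarget.

Section RealValued.
Variables (X : Type) (open : (X -> Prop) -> Prop).
Hypothesis Htop : is_topology open.

Lemma continuous_at_lipschitz (phi : R -> R) (L : R) (h : X -> R) x :
  0 <= L -> (forall s t, Rabs (phi s - phi t) <= L * Rabs (s - t)) ->
  continuous_at open R_dist_fun h x ->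
  continuous_at open R_dist_fun (fun y => phi (h y)) x.
Proof.
  intros HL Hphi Hh e He.
  destruct (Hh (e / (L + 1))) as [U [HU [Ux Hclose]]].
  { apply Rdiv_lt_0_compat; lra. }
  exists U; repeat split; auto. intros y Uy. unfold R_dist_fun in *.
  specialize (Hclose y Uy). pose proof (Hphi (h x) (h y)).
  apply (Rmult_lt_compat_r (L + 1)) in Hclose; [|lra].
  unfold Rdiv in Hclose. rewrite Rmult_assoc, Rinv_l, Rmult_1_r in Hclose; [|lra].
  pose proof (Rabs_pos (h x - h y)). nra.
Qed.

Lemma continuous_at_Rmin (h1 h2 : X -> R) x :
  continuous_at open R_dist_fun h1 x -> continuous_at open R_dist_fun h2 x ->
  continuous_at open R_dist_fun (fun y => Rmin (h1 y) (h2 y)) x.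
Proof.
  intros H1 H2 e He.
  destruct (H1 (e / 2)) as [U1 [HU1 [U1x P1]]]; [lra|].
  destruct (H2 (e / 2)) as [U2 [HU2 [U2x P2]]]; [lra|].
  exists (fun y => U1 y /\ U2 y). split; [apply open_and; auto|]. split; [auto|].
  intros y [U1y U2y]. specialize (P1 y U1y); specialize (P2 y U2y).
  revert P1 P2; unfold R_dist_fun, Rmin.
  repeat destruct Rle_dec; unfold Rabs; repeat destruct Rcase_abs; lra.
Qed.

End RealValued.

Definition upper_ramp (t : R) : R := Rmax 0 (2 * t - 1).
Definition lower_ramp (t : R) : R := Rmin 1 (2 * t).
Definition refined_bump (h t : R) : R := Rmin (1 - h) (upper_ramp t).

Lemma upper_ramp_lipschitz s t :
  Rabs (upper_ramp s - upper_ramp t) <= 2 * Rabs (s - t).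
Proof.
  unfold upper_ramp, Rmax; repeat destruct Rle_dec;
    unfold Rabs; repeat destruct Rcase_abs; lra.
Qed.

Lemma lower_ramp_lipschitz s t :
  Rabs (lower_ramp s - lower_ramp t) <= 2 * Rabs (s - t).
Proof.
  unfold lower_ramp, Rmin; repeat destruct Rle_dec;
    unfold Rabs; repeat destruct Rcase_abs; lra.
Qed.

Lemma one_minus_lipschitz s t : Rabs ((1 - s) - (1 - t)) <= 1 * Rabs (s - t).
Proof. unfold Rabs; repeat destruct Rcase_abs; lra. Qed.

Lemma lower_ramp_range t : 0 <= t <= 1 -> 0 <= lower_ramp t <= 1.
Proof. unfold lower_ramp, Rmin; destruct Rle_dec; lra. Qed.

Lemma lower_ramp_pos t : 0 < lower_ramp t -> 0 < t.
Proof. unfold lower_ramp, Rmin; destruct Rle_dec; lra. Qed.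

Lemma lower_ramp_above_half t : 1 / 2 < t -> lower_ramp t = 1.
Proof. unfold lower_ramp, Rmin; destruct Rle_dec; lra. Qed.

Lemma refined_bump_range h t :
  0 <= h <= 1 -> 0 <= t <= 1 -> 0 <= refined_bump h t <= 1.
Proof.
  unfold refined_bump, upper_ramp, Rmin, Rmax; repeat destruct Rle_dec; lra.
Qed.

Lemma refined_bump_pos h t : 0 < refined_bump h t -> h < 1 /\ 1 / 2 < t.
Proof.
  unfold refined_bump, upper_ramp, Rmin, Rmax; repeat destruct Rle_dec; lra.
Qed.

Lemma refined_bump_one : refined_bump 0 1 = 1.
Proof.
  unfold refined_bump, upper_ramp, Rmin, Rmax; repeat destruct Rle_dec; lra.
Qed.

Lemma path_on01_reverse {Y : Type} (d : Y -> Y -> R) (gamma : R -> Y) :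
  path_on01 d gamma -> path_on01 d (fun t => gamma (1 - t)).
Proof.
  intros Hgamma t Ht eps Heps.
  destruct (Hgamma (1 - t) ltac:(lra) eps Heps) as [delta [Hdelta Hnear]].
  exists delta; split; [exact Hdelta|]. intros s Hs Hst. apply Hnear; [lra|].
  replace (1 - s - (1 - t)) with (- (s - t)) by ring. rewrite Rabs_Ropp. exact Hst.
Qed.

Lemma joined_by_small_arc_sym {Y : Type} (d : Y -> Y -> R) a b r :
  joined_by_small_arc d a b r -> joined_by_small_arc d b a r.
Proof.
  intros [gamma [Hpath [H0 [H1 [r' [Hr' Hdiam]]]]]].
  exists (fun t => gamma (1 - t)). split; [apply path_on01_reverse; exact Hpath|].
  rewrite Rminus_0_r, Rminus_diag. split; [exact H1|]. split; [exact H0|].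
  exists r'; split; [exact Hr'|]. intros s t Hs Ht. apply Hdiam; lra.
Qed.

Lemma inv_pow2_succ k : 1 / 2 ^ S k = 1 / 2 ^ k / 2.
Proof. simpl. field. apply pow_nonzero. lra. Qed.

Lemma inv_pow2_pos k : 0 < 1 / 2 ^ k.
Proof. apply Rdiv_lt_0_compat; [lra|]. apply pow_lt; lra. Qed.

Lemma error_budget k m r s :
  r < 1 / 2 ^ (k + 2) -> s <= 1 / 2 ^ (k + 1) - 1 / 2 ^ (m + 1) ->
  r + s < 1 / 2 ^ k.
Proof.
  intros Hr Hs. pose proof (inv_pow2_pos k). pose proof (inv_pow2_pos (m + 1)).
  replace (k + 2)%nat with (S (S k)) in Hr by lia.
  replace (k + 1)%nat with (S k) in Hs by lia.
  rewrite !inv_pow2_succ in Hr. rewrite inv_pow2_succ in Hs. lra.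
Qed.

Section Construction.
Variables (X : Type) (open : (X -> Prop) -> Prop).
Hypothesis Htop : is_topology open.
Variables (Y : Type) (d : Y -> Y -> R).
Hypothesis Hmet : is_metric d.
Variables (n : nat) (I : nat -> Type) (F : forall k, I k -> X -> Prop)
  (p : forall k, I k -> Y).
Hypothesis Hdisc : forall k, (k <= n)%nat -> strictly_functionally_discrete open (F k).
Hypothesis HI0 : exists i0 : I 0%nat, forall i, i = i0.
Hypothesis HC : forall k, (k < n)%nat -> forall i : I (S k),
  exists j : I k, forall x, F (S k) i x -> F k j x.
Hypothesis HD : forall (i0 : I 0%nat) (i : I 1%nat),
  joined_by_arc d (p 0%nat i0) (p 1%nat i).
Hypothesis HE : forall k, (1 <= k)%nat -> (k <= n - 1)%nat ->
  forall (i : I (S k)) (j : I k), (forall x, F (S k) i x -> F k j x) ->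
  joined_by_small_arc d (p (S k) i) (p k j) (1 / 2 ^ (k + 2)%nat).

Record stage (m : nat) (a : I m -> X -> R) (G : X -> Y) : Prop := {
  stage_bump_cont : forall j x, continuous_at open R_dist_fun (a j) x;
  stage_bump_range : forall j x, 0 <= a j x <= 1;
  stage_bump_one : forall j x, F m j x -> a j x = 1;
  stage_cont : forall x, continuous_at open d G x;
  stage_center : forall j x, 1 / 2 < a j x -> G x = p m j;
  stage_error : forall k, (1 <= k)%nat -> (k <= m)%nat -> forall j x, F k j x ->
    d (p k j) (G x) <= 1 / 2 ^ (k + 1) - 1 / 2 ^ (m + 1) }.

Lemma stage_zero : exists a G, stage 0 a G.
Proof.
  destruct HI0 as [i0 Hi0].
  exists (fun _ _ => 1), (fun _ => p 0%nat i0). constructor.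
  - intros. apply continuous_at_const; [exact Htop|exact is_metric_R_dist_fun].
  - intros; lra.
  - reflexivity.
  - intros. apply continuous_at_const; assumption.
  - intros j x _. rewrite (Hi0 j). reflexivity.
  - intros; lia.
Qed.

Lemma arc_to_child m (i : I (S m)) (j : I m) :
  (m < n)%nat -> (forall x, F (S m) i x -> F m j x) ->
  exists gamma, path_on01 d gamma /\ gamma 0 = p m j /\ gamma 1 = p (S m) i /\
    ((1 <= m)%nat -> forall s t, 0 <= s <= 1 -> 0 <= t <= 1 ->
       d (gamma s) (gamma t) < 1 / 2 ^ (m + 2)).
Proof.
  intros Hm Hij. destruct m as [|m].
  - destruct (HD j i) as [gamma [Hpath [H0 H1]]].
    exists gamma; repeat split; auto. intros; lia.
  - destruct (joined_by_small_arc_sym d _ _ _ (HE (S m) ltac:(lia) ltac:(lia) i j Hij))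
      as [gamma [Hpath [H0 [H1 [r' [Hr' Hdiam]]]]]].
    exists gamma; repeat split; auto. intros _ s t Hs Ht.
    apply (Rle_lt_trans _ r'); auto.
Qed.

Lemma stage_extend m a G a' G' :
  stage m a G ->
  (forall j x, continuous_at open R_dist_fun (a' j) x) ->
  (forall j x, 0 <= a' j x <= 1) ->
  (forall j x, F (S m) j x -> a' j x = 1) ->
  (forall x, continuous_at open d G' x) ->
  (forall j x, 1 / 2 < a' j x -> G' x = p (S m) j) ->
  ((1 <= m)%nat -> forall x, d (G x) (G' x) < 1 / 2 ^ (m + 2)) ->
  stage (S m) a' G'.
Proof.
  intros Hstage Ha'_cont Ha'_range Ha'_one HG'_cont HG'_center Hstep.
  constructor; auto.
  intros k Hk1 Hkm j x Hjx.
  replace (S m + 1)%nat with (S (m + 1)) by lia. rewrite inv_pow2_succ.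
  destruct (Nat.eq_dec k (S m)) as [->|Hk].
  - rewrite (HG'_center j x) by (rewrite Ha'_one by exact Hjx; lra).
    rewrite d_self by exact Hmet.
    replace (S m + 1)%nat with (S (m + 1)) by lia. rewrite inv_pow2_succ. lra.
  - pose proof (stage_error _ _ _ Hstage k Hk1 ltac:(lia) j x Hjx).
    specialize (Hstep ltac:(lia) x).
    replace (m + 2)%nat with (S (m + 1)) in Hstep by lia.
    rewrite inv_pow2_succ in Hstep.
    pose proof (d_triangle Y d Hmet (p k j) (G x) (G' x)). lra.
Qed.

Lemma refined_bumps_spec m a G (h : I (S m) -> X -> R) (par : I (S m) -> I m) :
  stage m a G ->
  (forall i, continuous_top_metric open R_dist_fun (h i)) ->
  (forall i x, 0 <= h i x <= 1) ->
  (forall i x, F (S m) i x -> h i x = 0) ->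
  (forall i x, F (S m) i x -> F m (par i) x) ->
  (forall i x, continuous_at open R_dist_fun
                 (fun y => refined_bump (h i y) (a (par i) y)) x) /\
  (forall i x, 0 <= refined_bump (h i x) (a (par i) x) <= 1) /\
  (forall i x, F (S m) i x -> refined_bump (h i x) (a (par i) x) = 1).
Proof.
  intros Hstage Hh_cont Hh_range Hh_zero Hpar. split; [|split].
  - intros i x. apply continuous_at_Rmin; [exact Htop| |].
    + apply (continuous_at_lipschitz _ _ (fun t => 1 - t) 1);
        auto using one_minus_lipschitz; [lra|].
      apply continuous_top_metric_iff; auto using is_metric_R_dist_fun.
    + apply (continuous_at_lipschitz _ _ upper_ramp 2);
        auto using upper_ramp_lipschitz; [lra|].
      apply (stage_bump_cont _ _ _ Hstage).
  - intros i x. apply refined_bump_range; [apply Hh_range|].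
    apply (stage_bump_range _ _ _ Hstage).
  - intros i x Hix. rewrite Hh_zero by exact Hix.
    rewrite (stage_bump_one _ _ _ Hstage) by (apply Hpar; exact Hix).
    apply refined_bump_one.
Qed.

Lemma stage_succ m a G : (m < n)%nat -> stage m a G ->
  exists a' G', stage (S m) a' G'.
Proof.
  intros Hm Hstage.
  destruct (Hdisc (S m) Hm) as [h [Hh_cont [Hh_range [Hh_zero Hh_disc]]]].
  destruct (choice _ (HC m Hm)) as [par Hpar].
  destruct (choice _ (fun i => arc_to_child m i (par i) Hm (Hpar i)))
    as [gamma Hgamma].
  set (a' := fun i x => refined_bump (h i x) (a (par i) x)).
  set (b := fun i x => lower_ramp (a' i x)).
  destruct (refined_bumps_spec m a G h par Hstage Hh_cont Hh_range Hh_zero Hpar)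
    as [Ha'_cont [Ha'_range Ha'_one]].
  assert (Hb_pos : forall i x, 0 < b i x -> h i x < 1 /\ 1 / 2 < a (par i) x).
  { intros i x Hb. apply refined_bump_pos, lower_ramp_pos, Hb. }
  destruct (glue_arcs X open Htop Y d Hmet G b gamma) as [G' [HG'_cont [HG'_off HG'_on]]].
  - apply (stage_cont _ _ _ Hstage).
  - intros i x. apply (continuous_at_lipschitz _ _ lower_ramp 2);
      [lra|apply lower_ramp_lipschitz|exact (Ha'_cont i x)].
  - intros i x. apply lower_ramp_range, Ha'_range.
  - intro i. apply Hgamma.
  - intros i x Hb. destruct (Hgamma i) as [_ [H0 _]]. rewrite H0.
    apply (stage_center _ _ _ Hstage), Hb_pos, Hb.
  - apply (at_most_one_locally_mono open (fun i x => h i x < 1)); [exact Hh_disc|].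
    intros i x Hb. apply Hb_pos, Hb.
  - exists a', G'. apply (stage_extend m a G); auto.
    + intros j x Hj. destruct (Hgamma j) as [_ [_ [H1 _]]].
      assert (Hb1 : b j x = 1) by (apply lower_ramp_above_half; exact Hj).
      rewrite <- H1, <- Hb1. apply HG'_on. lra.
    + intros Hm1 x. destruct (classic (exists i, 0 < b i x)) as [[i Hi]|Hnone].
      * destruct (Hgamma i) as [_ [H0 [_ Hdiam]]].
        rewrite (HG'_on i x Hi), (stage_center _ _ _ Hstage (par i) x)
          by apply Hb_pos, Hi.
        rewrite <- H0. apply Hdiam; [exact Hm1|lra|apply lower_ramp_range, Ha'_range].
      * rewrite HG'_off by (intro i; apply Rnot_lt_le; intro Hi; eauto).
        rewrite d_self by exact Hmet. apply inv_pow2_pos.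
Qed.

Lemma stage_exists m : (m <= n)%nat -> exists a G, stage m a G.
Proof.
  induction m as [|m IHm]; intro Hm.
  - exact stage_zero.
  - destruct (IHm ltac:(lia)) as [a [G Hstage]]. exact (stage_succ m a G Hm Hstage).
Qed.

End Construction.

Theorem mainTheorem5
  (X : Type) (open : (X -> Prop) -> Prop) (Htop : is_topology open)
  (Y : Type) (d : Y -> Y -> R) (Hmet : is_metric d)
  (f : X -> Y) (n : nat) (Hn : (2 <= n)%nat)
  (I : nat -> Type) (F : forall k, I k -> X -> Prop) (p : forall k, I k -> Y)
  (Hdisc : forall k, (k <= n)%nat -> strictly_functionally_discrete open (F k))
  (HA : exists i0 : I 0%nat, (forall i, i = i0) /\ (forall x, F 0%nat i0 x))
  (HB : forall k, (k <= n)%nat -> forall i : I k,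
      exists r, r < 1 / 2 ^ (k + 2)%nat /\ forall x, F k i x -> d (f x) (p k i) <= r)
  (HC : forall k, (k < n)%nat -> forall i : I (S k),
      exists j : I k, forall x, F (S k) i x -> F k j x)
  (HD : forall (i0 : I 0%nat) (i : I 1%nat), joined_by_arc d (p 0%nat i0) (p 1%nat i))
  (HE : forall k, (1 <= k)%nat -> (k <= n - 1)%nat ->
      forall (i : I (S k)) (j : I k), (forall x, F (S k) i x -> F k j x) ->
      joined_by_small_arc d (p (S k) i) (p k j) (1 / 2 ^ (k + 2)%nat)) :
  exists g : X -> Y, continuous_top_metric open d g /\
    forall k, (1 <= k)%nat -> (k <= n)%nat ->
      forall x, (exists i : I k, F k i x) -> d (f x) (g x) < 1 / 2 ^ k.
Proof.
  destruct HA as [i0 [Hi0 _]].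
  destruct (stage_exists X open Htop Y d Hmet n I F p Hdisc (ex_intro _ i0 Hi0)
              HC HD HE n (le_n n)) as [a [G Hstage]].
  exists G. split.
  - apply continuous_top_metric_iff; auto. eapply stage_cont, Hstage.
  - intros k Hk1 Hkn x [i Hi].
    destruct (HB k Hkn i) as [r [Hr Hfr]].
    assert (Herr := stage_error _ _ _ _ _ _ _ _ _ _ Hstage k Hk1 Hkn i x Hi).
    pose proof (d_triangle Y d Hmet (f x) (p k i) (G x)).
    pose proof (error_budget k n r _ Hr Herr). specialize (Hfr x Hi). lra.
Qed.
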